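(* Let $V$ be an $n$-dimensional complex Hilbert space with orthonormal basis $\{\lvert\psi_i\rangle\}_{i=1}^n$, and let $u$ be an $n\times n$ complex matrix with singular value decomposition $u = L D R$, where $L,R$ are unitary and $D=\mathrm{diag}(\sigma_1,\dots,\sigma_n)$ with $1\ge \sigma_1\ge\cdots\ge\sigma_n\ge 0$. Let $\epsilon_1,\dots,\epsilon_n$ be real numbers with $\tilde\sigma_j:=\sigma_j+\epsilon_j\in[0,1]$ for all $j$, and let $\tilde u$ be the matrix $\tilde u_{ij}=\sum_{k=1}^n \tilde\sigma_k L_{ik}R_{kj}$. Let $\mathbf{u}=\sum_{i,j} u_{ij}\lvert\psi_i\rangle\langle\psi_j\rvert$ and $\tilde{\mathbf{u}}=\sum_{i,j}\tilde u_{ij}\lvert\psi_i\rangle\langle\psi_j\rvert$ be the associated linear maps $V\to V$. Then, in the operator 2-norm on $\wedge V$, $$\|\wedge\mathbf{u}-\wedge\tilde{\mathbf{u}}\|\le \sum_{j=1}^n |\epsilon_j|.$$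
   Context: The exterior algebra (Fock space) $\wedge V=\bigoplus_{k\ge 0}\wedge^k V$ is the Hilbert space with orthonormal basis $\{\lvert\psi_{i_1}\rangle\wedge\cdots\wedge\lvert\psi_{i_k}\rangle : 1\le i_1<\cdots<i_k\le n,\ k\ge 0\}$. For a linear map $\mathbf{u}:V\to V$, the wedged map $\wedge\mathbf{u}:\wedge V\to\wedge V$ is the linear map defined on this basis by $\wedge\mathbf{u}(\lvert\psi_{i_1}\rangle\wedge\cdots\wedge\lvert\psi_{i_k}\rangle)=\mathbf{u}\lvert\psi_{i_1}\rangle\wedge\cdots\wedge\mathbf{u}\lvert\psi_{i_k}\rangle$ (with the empty wedge, $k=0$, mapped to itself). *)

From HB Require Import structures.
From mathcomp Require Import all_boot all_order all_algebra.
Set Implicit Arguments. Unset Strict Implicit. Unset Printing Implicit Defensive.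
Import Order.TTheory GRing.Theory Num.Theory.
Local Open Scope ring_scope.

(* V = C^n with orthonormal basis psi_i = the standard basis vectors;
   C is any numeric closed field (e.g. the complex numbers). *)

(* The Fock space /\V, in coordinates w.r.t. its orthonormal basis
   { psi_{i_1} /\ ... /\ psi_{i_k} : i_1 < ... < i_k }, indexed by the
   subset S = {i_1,...,i_k} of 'I_n. *)
Definition fock (C : numClosedFieldType) (n : nat) := {set 'I_n} -> C.

(* the i-th coordinate of a column vector (0 when i >= n) *)
Definition vec_at (C : numClosedFieldType) n (v : 'cV[C]_n) (i : nat) : C :=
  if insub i is Some j then v j 0 else 0.

Definition sorted_elems n (S : {set 'I_n}) : seq nat := [seq val i | i <- enum S].

(* v_0 /\ ... /\ v_{k-1} in /\V: its coordinate on the basis element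
   psi_{s_0} /\ ... /\ psi_{s_{k-1}} (s_0 < ... < s_{k-1}) is det [v_b(s_a)]_{a,b},
   and it has no component outside /\^k V. *)
Definition wedge (C : numClosedFieldType) n k (v : 'I_k -> 'cV[C]_n) : fock C n :=
  fun S => if #|S| == k then
             \det (\matrix_(a < k, b < k) vec_at (v b) (nth 0%N (sorted_elems S) a))
           else 0.

(* /\u : the linear map on /\V sending psi_{t_0} /\ ... /\ psi_{t_{k-1}}
   (t_0 < ... < t_{k-1} the elements of T) to u psi_{t_0} /\ ... /\ u psi_{t_{k-1}},
   extended linearly. (u psi_t is the t-th column of u; enum_val enumerates T
   increasingly.) *)
Definition wedge_map (C : numClosedFieldType) n (u : 'M[C]_n) (x : fock C n) : fock C n :=
  fun S => \sum_(T : {set 'I_n})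
             x T * wedge (fun b : 'I_#|T| => col (@enum_val _ (pred_of_set T) b) u) S.

Definition fock_norm (C : numClosedFieldType) n (x : fock C n) : C :=
  sqrtC (\sum_(S : {set 'I_n}) `|x S| ^+ 2).

Definition adjmx (C : numClosedFieldType) n (A : 'M[C]_n) : 'M[C]_n :=
  (map_mx (fun z => z^*) A)^T.
Definition unitary (C : numClosedFieldType) n (A : 'M[C]_n) : Prop :=
  A *m adjmx A = 1%:M /\ adjmx A *m A = 1%:M.

(* The minors of a matrix indexed by pairs of equally sized subsets form its
   compound matrix, which is the matrix of /\u in the basis of /\V; by the
   Cauchy-Binet formula the compound is multiplicative, commutes with the
   adjoint, and sends a diagonal matrix to the diagonal matrix of the products
   prod_(i in U) sigma_i.  Hence /\u - /\u~ = /\L (/\D - /\D~) /\R with /\L and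
   /\R unitary, and /\D - /\D~ is diagonal with entries
   prod_(i in U) sigma_i - prod_(i in U) (sigma_i + eps_i), which telescope to at
   most sum_j |eps_j| because every factor lies in [0, 1]. *)

From HB Require Import structures.
From mathcomp Require Import all_boot all_order all_algebra.
From mathcomp Require Import perm.
Set Implicit Arguments. Unset Strict Implicit. Unset Printing Implicit Defensive.
Import Order.TTheory GRing.Theory Num.Theory.
Local Open Scope ring_scope.

Lemma norm_prodB_le (R : numDomainType) (I : Type) (r : seq I) (P : pred I) (a b : I -> R) :
  (forall i, `|a i| <= 1) -> (forall i, `|b i| <= 1) ->
  `|\prod_(i <- r | P i) a i - \prod_(i <- r | P i) b i| <= \sum_(i <- r | P i) `|a i - b i|.
Proof.
move=> a_le1 b_le1; elim: r => [|i r IHr]; first by rewrite !big_nil subrr normr0.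
rewrite !big_cons; case: (P i) => //.
set p := \prod_(j <- r | P j) a j; set q := \prod_(j <- r | P j) b j.
have q_le1 : `|q| <= 1.
  by rewrite normr_prod; apply: prodr_ile1 => j _; rewrite normr_ge0 b_le1.
have -> : a i * p - b i * q = a i * (p - q) + (a i - b i) * q.
  by rewrite mulrBr mulrBl addrA subrK.
apply: le_trans (ler_normD _ _) _; rewrite !normrM addrC; apply: lerD.
  by rewrite -[X in _ <= X]mulr1; apply: ler_wpM2l.
by apply: le_trans IHr; rewrite -[X in _ <= X]mul1r; apply: ler_wpM2r.
Qed.

Lemma mulmx_diag_mxE (R : comNzRingType) n (A B : 'M[R]_n) (d : 'rV[R]_n) :
  A *m diag_mx d *m B = \matrix_(i, j) \sum_k d 0 k * A i k * B k j.
Proof.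
apply/matrixP => i j; rewrite !mxE; apply: eq_bigr => k _.
by rewrite mul_mx_diag mxE (mulrC (A i k)).
Qed.

Section CauchyBinet.
Variables (R : comNzRingType) (n : nat) (x0 : 'I_n).

Definition enum_at (U : {set 'I_n}) (a : nat) : 'I_n := nth x0 (enum U) a.

Lemma enum_at_mem (U : {set 'I_n}) a : (a < #|U|)%N -> enum_at U a \in U.
Proof. by move=> a_lt; rewrite /enum_at -mem_enum mem_nth // -cardE. Qed.

Lemma enum_at_inj (U : {set 'I_n}) a b : (a < #|U|)%N -> (b < #|U|)%N ->
  enum_at U a = enum_at U b -> a = b.
Proof.
move=> a_lt b_lt eq_ab; apply/eqP.
by rewrite -(nth_uniq x0 _ _ (enum_uniq (mem U))) -?cardE //; apply/eqP.
Qed.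

Lemma enum_at_index (U : {set 'I_n}) i : i \in U -> enum_at U (index i (enum U)) = i.
Proof. by move=> iU; rewrite /enum_at nth_index // mem_enum. Qed.

Lemma index_enum_lt_card (U : {set 'I_n}) i : i \in U -> (index i (enum U) < #|U|)%N.
Proof. by move=> iU; rewrite cardE index_mem mem_enum. Qed.

Lemma det_mulmx_ffun k (A : 'M[R]_(k, n)) (B : 'M[R]_(n, k)) :
  \det (A *m B) = \sum_(f : {ffun 'I_k -> 'I_n})
     (\prod_i A i (f i)) * \det (\matrix_(i, j) B (f i) j).
Proof.
transitivity (\sum_(s : 'S_k) \sum_(f : {ffun 'I_k -> 'I_n})
   (-1) ^+ s * \prod_i (A i (f i) * B (f i) (s i))).
  apply: eq_bigr => s _; rewrite -big_distrr /=; congr (_ * _).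
  rewrite -(bigA_distr_bigA (fun i j => A i j * B j (s i))) /=.
  by apply: eq_bigr => i _; rewrite mxE.
rewrite exchange_big; apply: eq_bigr => f _ /=.
rewrite big_distrr /=; apply: eq_bigr => s _.
by rewrite big_split /= mulrCA; congr (_ * (_ * _)); apply: eq_bigr => i _; rewrite mxE.
Qed.

Lemma big_injective_image k (U : {set 'I_n}) (F : {ffun 'I_k -> 'I_n} -> R) :
  #|U| = k ->
  \sum_(f : {ffun 'I_k -> 'I_n} | injectiveb f && ([set f i | i in 'I_k] == U)) F f
    = \sum_(s : 'S_k) F [ffun i => enum_at U (s i)].
Proof.
move=> cardU.
pose h (s : 'S_k) : {ffun 'I_k -> 'I_n} := [ffun i => enum_at U (s i)].
pose g (f : {ffun 'I_k -> 'I_n}) : {ffun 'I_k -> 'I_k} :=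
  [ffun i => insubd i (index (f i) (enum U))].
have h_inj s : injective (h s).
  move=> i1 i2; rewrite !ffunE => /enum_at_inj.
  by rewrite cardU => /(_ (ltn_ord _) (ltn_ord _)) /val_inj /perm_inj.
have h_image s : [set h s i | i in 'I_k] == U.
  rewrite eqEcard card_imset // card_ord cardU leqnn andbT.
  by apply/subsetP => _ /imsetP [i _ ->]; rewrite ffunE enum_at_mem // cardU.
have mem_image f i : [set f i | i in 'I_k] == U -> f i \in U.
  by move/eqP <-; apply/imsetP; exists i.
have gE (f : {ffun 'I_k -> 'I_n}) i :
    [set f i | i in 'I_k] == U -> val (g f i) = index (f i) (enum U).
  move=> fU; rewrite ffunE val_insubd.
  by have := index_enum_lt_card (mem_image _ i fU); rewrite cardU => ->.
have hgK (f : {ffun 'I_k -> 'I_n}) : injectiveb f && ([set f i | i in 'I_k] == U) ->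
    h (insubd (1%g : 'S_k) (g f)) = f.
  case/andP=> /injectiveP f_inj fU.
  have g_inj : injectiveb (g f).
    apply/injectiveP => i1 i2 /(congr1 val); rewrite !gE // => eq_idx.
    apply: f_inj; rewrite -(enum_at_index (mem_image _ i1 fU)) eq_idx.
    by rewrite enum_at_index ?mem_image.
  apply/ffunP => i; rewrite ffunE -pvalE insubdK //.
  by rewrite /enum_at gE // nth_index // mem_enum mem_image.
have ghK s : insubd (1%g : 'S_k) (g (h s)) = s.
  suff -> : g (h s) = pval s by rewrite valKd.
  apply/ffunP => i; apply: val_inj; rewrite gE // ffunE /enum_at.
  by rewrite index_uniq ?enum_uniq ?pvalE // -cardE cardU.
rewrite (reindex_onto h _ hgK) (eq_bigl predT) // => s.
by rewrite (introT (injectiveP _) (h_inj s)) h_image ghK eqxx.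
Qed.

Lemma cauchy_binet k (A : 'M[R]_(k, n)) (B : 'M[R]_(n, k)) :
  \det (A *m B) = \sum_(U : {set 'I_n} | #|U| == k)
     \det (\matrix_(i, j) A i (enum_at U j)) * \det (\matrix_(i, j) B (enum_at U i) j).
Proof.
rewrite det_mulmx_ffun (bigID (fun f : {ffun 'I_k -> 'I_n} => injectiveb f)) /=.
rewrite [X in _ + X]big1 ?addr0; last first.
  move=> f /injectivePn [i1 [i2 ne_i12 eq_f12]].
  by rewrite (determinant_alternate ne_i12) ?mulr0 // => j; rewrite !mxE eq_f12.
rewrite (partition_big (fun f : {ffun 'I_k -> 'I_n} => [set f i | i in 'I_k])
  (fun U => #|U| == k)) /=; last first.
  by move=> f /injectiveP f_inj; rewrite card_imset // card_ord.
apply: eq_bigr => U /eqP cardU; rewrite big_injective_image //.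
rewrite [X in _ = X * _]/determinant big_distrl /=; apply: eq_bigr => s _.
rewrite -mulrA mulrCA; congr (_ * _).
  by apply: eq_bigr => i _; rewrite !mxE ffunE.
have -> : \matrix_(i, j) B ([ffun i => enum_at U (s i)] i) j
    = row_perm s (\matrix_(i, j) B (enum_at U i) j).
  by apply/matrixP => i j; rewrite !mxE ffunE.
by rewrite row_permE det_mulmx det_perm.
Qed.

Definition compound (A : 'M[R]_n) (S T : {set 'I_n}) : R :=
  if #|S| == #|T| then \det (\matrix_(a < #|T|, b < #|T|) A (enum_at S a) (enum_at T b))
  else 0.

Lemma compound_mulmx (A B : 'M[R]_n) S T :
  compound (A *m B) S T = \sum_U compound A S U * compound B U T.
Proof.
rewrite /compound; case: eqP => cardST; last first.
  apply/esym/big1 => U _; case: eqP => [cardSU|_]; last by rewrite mul0r.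
  by case: eqP => [cardUT|_]; [case: cardST; rewrite cardSU | rewrite mulr0].
have -> : \matrix_(a < #|T|, b < #|T|) (A *m B) (enum_at S a) (enum_at T b) =
    (\matrix_(a < #|T|, j < n) A (enum_at S a) j)
      *m (\matrix_(j < n, b < #|T|) B j (enum_at T b)).
  by apply/matrixP => a b; rewrite !mxE; apply: eq_bigr => j _; rewrite !mxE.
rewrite cauchy_binet [RHS](bigID (fun U : {set 'I_n} => #|U| == #|T|)) /=.
rewrite [X in _ = _ + X]big1 ?addr0 => [|U /negbTE ->]; last by rewrite mulr0.
apply: eq_bigr => U /eqP cardU; rewrite cardST cardU eqxx.
by congr (_ * _); congr (\det _); apply/matrixP => i j; rewrite !mxE.
Qed.

Lemma compound_diag_mx (d : 'rV[R]_n) S T :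
  compound (diag_mx d) S T = (S == T)%:R * \prod_(i in S) d 0 i.
Proof.
rewrite /compound; have [<-|neST] := eqVneq S T.
  rewrite eqxx mul1r.
  have -> : \matrix_(a < #|S|, b < #|S|) diag_mx d (enum_at S a) (enum_at S b)
      = diag_mx (\row_(a < #|S|) d 0 (enum_at S a)).
    apply/matrixP => a b; rewrite !mxE.
    have [-> | ne_ab] := eqVneq a b; first by rewrite !eqxx.
    case: eqP => [/enum_at_inj eq_ab|]; last by rewrite !mulr0n.
    by rewrite (ltn_ord a) (ltn_ord b) in eq_ab; case/eqP: ne_ab; apply/val_inj/eq_ab.
  rewrite det_diag (big_enum_val (A := mem S)) /=; apply: eq_bigr => i _.
  by rewrite mxE /enum_at (enum_val_nth x0).
rewrite mul0r; case: eqP => // cardST.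
have [s sS sNT] : exists2 s, s \in S & s \notin T.
  by apply/subsetPn; apply: contraNN neST => sST; rewrite eqEcard sST cardST leqnn.
have s_lt : (index s (enum S) < #|T|)%N by rewrite -cardST index_enum_lt_card.
rewrite (expand_det_row _ (Ordinal s_lt)) big1 // => b _; rewrite !mxE enum_at_index //.
by case: eqP => [eq_sb|_]; [rewrite eq_sb enum_at_mem in sNT | rewrite mulr0n mul0r].
Qed.

Lemma compound1 S T : compound 1%:M S T = (S == T)%:R.
Proof.
rewrite -diag_const_mx compound_diag_mx (eq_bigr (fun=> 1)) ?big1_eq ?mulr1 //.
by move=> i; rewrite mxE.
Qed.

Lemma compound_mulmx_diag (A B : 'M[R]_n) (d : 'rV[R]_n) S T :
  compound (A *m diag_mx d *m B) S T
    = \sum_U compound A S U * (\prod_(i in U) d 0 i) * compound B U T.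
Proof.
rewrite compound_mulmx; apply: eq_bigr => U _; rewrite compound_mulmx big_distrl /=.
rewrite (bigD1 U) //= big1 ?addr0 => [|V neVU]; last first.
  by rewrite compound_diag_mx (negbTE neVU) mul0r mulr0 mul0r.
by rewrite compound_diag_mx eqxx mul1r.
Qed.

End CauchyBinet.

Section FockSpace.
Variables (C : numClosedFieldType) (n : nat).

Definition fock_apply (M : {set 'I_n} -> {set 'I_n} -> C) (y : fock C n) : fock C n :=
  fun S => \sum_T M S T * y T.

Definition fock_norm2 (y : fock C n) : C := \sum_S `|y S| ^+ 2.

Lemma fock_norm2_ge0 y : 0 <= fock_norm2 y.
Proof. by apply: sumr_ge0 => S _; rewrite exprn_ge0. Qed.

Lemma fock_norm2_scale_le (a : {set 'I_n} -> C) (c : C) y :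
  (forall U, `|a U| <= c) -> fock_norm2 (fun U => a U * y U) <= c ^+ 2 * fock_norm2 y.
Proof.
move=> a_le; rewrite /fock_norm2 mulr_sumr; apply: ler_sum => U _.
rewrite normrM exprMn ler_wpM2r ?exprn_ge0 // lerXn2r ?nnegrE //.
exact: le_trans (a_le U).
Qed.

Lemma fock_normE (y : fock C n) : fock_norm y = sqrtC (fock_norm2 y).
Proof. by []. Qed.

Lemma fock_norm_ge0 (y : fock C n) : 0 <= fock_norm y.
Proof. by rewrite fock_normE sqrtC_ge0 fock_norm2_ge0. Qed.

Lemma eq_fock_norm2 (y z : fock C n) : (forall S, y S = z S) -> fock_norm2 y = fock_norm2 z.
Proof. by move=> eq_yz; apply: eq_bigr => S _; rewrite eq_yz. Qed.

Lemma fock_norm_le (c : C) (y z : fock C n) : 0 <= c ->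
  fock_norm2 y <= c ^+ 2 * fock_norm2 z -> fock_norm y <= c * fock_norm z.
Proof.
move=> c_ge0 yz_le; rewrite !fock_normE -(sqrCK c_ge0).
rewrite -sqrtCM ?nnegrE ?exprn_ge0 ?fock_norm2_ge0 //.
by rewrite ler_sqrtC ?nnegrE ?mulr_ge0 ?exprn_ge0 ?fock_norm2_ge0.
Qed.

Variable x0 : 'I_n.
Local Notation compound := (compound x0).

Lemma compound_adjmx (A : 'M[C]_n) S T : compound (adjmx A) S T = (compound A T S)^*.
Proof.
rewrite /compound eq_sym; case: eqP => [cardTS|_]; last by rewrite rmorph0.
rewrite -det_map_mx -det_tr -cardTS; congr (\det _).
by apply/matrixP => a b; rewrite !mxE.
Qed.

Lemma compound_unitary_orthonormal (A : 'M[C]_n) T T' : unitary A ->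
  \sum_S (compound A S T')^* * compound A S T = (T' == T)%:R.
Proof.
case=> _ AA1; rewrite -(compound1 _ x0) -AA1 compound_mulmx.
by apply: eq_bigr => S _; rewrite compound_adjmx.
Qed.

Lemma fock_norm2_compound_unitary (A : 'M[C]_n) y :
  unitary A -> fock_norm2 (fock_apply (compound A) y) = fock_norm2 y.
Proof.
move=> A_unitary; rewrite /fock_norm2 /fock_apply.
transitivity (\sum_S \sum_T \sum_T' (compound A S T * y T) * (compound A S T' * y T')^*).
  apply: eq_bigr => S _; rewrite normCK rmorph_sum big_distrl /=.
  by apply: eq_bigr => T _; rewrite big_distrr.
rewrite exchange_big; apply: eq_bigr => T _ /=; rewrite exchange_big /=.
have inner T' : \sum_S (compound A S T * y T) * (compound A S T' * y T')^*
    = y T * (y T')^* * (T' == T)%:R.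
  rewrite -(compound_unitary_orthonormal T T' A_unitary) big_distrr /=.
  by apply: eq_bigr => S _; rewrite rmorphM mulrACA mulrC (mulrC (compound A S T)).
rewrite (eq_bigr _ (fun T' _ => inner T')) (bigD1 T) //= big1 ?addr0.
  by rewrite eqxx mulr1 normCK.
by move=> T' /negbTE ->; rewrite mulr0.
Qed.

Lemma wedge_mapE (u : 'M[C]_n) x S : wedge_map u x S = fock_apply (compound u) x S.
Proof.
apply: eq_bigr => T _; rewrite mulrC; congr (_ * _).
rewrite /wedge /compound; case: eqP => // cardST.
congr (\det _); apply/matrixP => a b; rewrite !mxE.
have a_lt : (a < size (enum S))%N by rewrite -cardE cardST.
by rewrite /sorted_elems (nth_map x0) // /vec_at valK !mxE /enum_at (enum_val_nth x0).
Qed.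

Lemma wedge_map_svdB (A B : 'M[C]_n) (d e : 'rV[C]_n) x S :
  wedge_map (A *m diag_mx d *m B) x S - wedge_map (A *m diag_mx e *m B) x S
  = fock_apply (compound A)
      (fun U => (\prod_(i in U) d 0 i - \prod_(i in U) e 0 i) * fock_apply (compound B) x U) S.
Proof.
transitivity (\sum_T \sum_U
    compound A S U * (\prod_(i in U) d 0 i - \prod_(i in U) e 0 i) * compound B U T * x T).
  rewrite !wedge_mapE /fock_apply -sumrB; apply: eq_bigr => T _.
  rewrite !compound_mulmx_diag -mulrBl -sumrB big_distrl; apply: eq_bigr => U _ /=.
  by rewrite -mulrBl -mulrBr.
rewrite exchange_big /fock_apply; apply: eq_bigr => U _ /=.
by rewrite !big_distrr; apply: eq_bigr => T _ /=; rewrite !mulrA.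
Qed.

Lemma fock_norm_wedge_map_svdB_le (A B : 'M[C]_n) (d e : 'rV[C]_n) x :
  unitary A -> unitary B -> (forall i, `|d 0 i| <= 1) -> (forall i, `|e 0 i| <= 1) ->
  fock_norm (fun S =>
      wedge_map (A *m diag_mx d *m B) x S - wedge_map (A *m diag_mx e *m B) x S)
    <= (\sum_i `|d 0 i - e 0 i|) * fock_norm x.
Proof.
move=> A_unitary B_unitary d_le1 e_le1; set c := \sum_i _.
have prodB_le U : `|\prod_(i in U) d 0 i - \prod_(i in U) e 0 i| <= c.
  apply: le_trans (norm_prodB_le _ _ d_le1 e_le1) _.
  by rewrite [leRHS](bigID (mem U)) /= lerDl sumr_ge0.
apply: fock_norm_le; first exact: sumr_ge0.
rewrite (eq_fock_norm2 (wedge_map_svdB _ _ _ _ x)) fock_norm2_compound_unitary //.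
by rewrite -(fock_norm2_compound_unitary x B_unitary); apply: fock_norm2_scale_le.
Qed.

End FockSpace.

Theorem mainTheorem1 (C : numClosedFieldType) (n : nat)
    (u L R : 'M[C]_n) (sigma eps : 'I_n -> C)
    (HL : unitary L) (HR : unitary R)
    (Hsvd : u = L *m diag_mx (\row_k sigma k) *m R)
    (Hsig01 : forall j, 0 <= sigma j <= 1)
    (Hsigdec : forall i j : 'I_n, (i <= j)%N -> sigma j <= sigma i)
    (Heps_real : forall j, eps j \is Num.real)
    (Hsigt01 : forall j, 0 <= sigma j + eps j <= 1) :
  let ut : 'M[C]_n :=
    \matrix_(i < n, j < n) \sum_(k < n) (sigma k + eps k) * L i k * R k j in
  forall x : fock C n,
    fock_norm (fun S => wedge_map u x S - wedge_map ut x S)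
      <= (\sum_(j < n) `|eps j|) * fock_norm x.
Proof.
move=> ut x.
(* [enum_at] needs a default index, so the empty case n = 0 is done by hand. *)
have [n0 | n_gt0] := posnP n.
  have -> : ut = u by apply/matrixP => i; have := ltn_ord i; rewrite {2}n0.
  rewrite fock_normE /fock_norm2 big1 ?sqrtC0 ?mulr_ge0 ?sumr_ge0 ?fock_norm_ge0 // => S _.
  by rewrite subrr normr0 expr0n.
have ut_svd : ut = L *m diag_mx (\row_k (sigma k + eps k)) *m R.
  rewrite mulmx_diag_mxE; apply/matrixP => i j; rewrite !mxE.
  by apply: eq_bigr => k _; rewrite mxE.
rewrite Hsvd ut_svd.
apply: le_trans (fock_norm_wedge_map_svdB_le (Ordinal n_gt0) x HL HR _ _) _.
- by move=> i; rewrite mxE ger0_norm; case/andP: (Hsig01 i).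
- by move=> i; rewrite mxE ger0_norm; case/andP: (Hsigt01 i).
rewrite ler_wpM2r ?fock_norm_ge0 //; apply: ler_sum => i _.
by rewrite !mxE opprD addNKr normrN.
Qed.
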